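(* Let $\mathbf{k}$ be an algebraically closed field, $G=\mathrm{GL}_n$, and $M$ a finite-dimensional completely reducible rational $G$-module. Let $\underline{G}=G\ltimes M$ and $\underline{\mathcal{N}}=\mathcal{N}\times M$ the nilpotent cone of $\mathrm{Lie}(\underline{G})$. If $\underline{\mathcal{N}}$ has finitely many orbits under the adjoint $\underline{G}$-action, then $M$ is an irreducible $G$-module.
   Context: $\underline{G}$ is $G\times M$ with product $(g_1,v_1)(g_2,v_2)=(g_1g_2,g_1.v_2+v_1)$; its Lie algebra is $\mathfrak{gl}_n\times M$ and its adjoint action is $\mathrm{Ad}(g,v)(X,w)=(\mathrm{Ad}(g)X,-(\mathrm{Ad}(g)X).v+g.w)$. $\mathcal{N}$ is the nilpotent cone of $\mathfrak{gl}_n$. *)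

From HB Require Import structures.
From mathcomp Require Import all_boot all_order all_algebra.
From mathcomp Require Import mpoly.
Set Implicit Arguments. Unset Strict Implicit. Unset Printing Implicit Defensive.
Import Order.TTheory GRing.Theory Num.Theory.
Local Open Scope ring_scope.

Section RatRep.
Variables (k : fieldType) (n m : nat).

(* A rational representation GL_n(k) -> GL_m(k) is given by polynomial data:
   rho(g)_{ij} = P_{ij}(g_{ab}) / det(g)^N, where the n*n variables of P_{ij}
   are the matrix entries (variable mxvec_index a b <-> entry g_{ab}). *)
Definition ratrep (P : 'I_m -> 'I_m -> {mpoly k[n * n]}) (N : nat)
  (g : 'M[k]_n) : 'M[k]_m :=
  \matrix_(i, j) ((P i j).@[fun t => mxvec g 0 t] / \det g ^+ N).

Definition curveI (X : 'M[k]_n) : 'M[{poly k}]_n :=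
  1%:M + 'X *: map_mx polyC X.

(* the differential d rho (X) = d/d eps [rho(1 + eps X)] at eps = 0,
   computed by the quotient rule on P_{ij}(1+eps X) / det(1+eps X)^N *)
Definition dratrep (P : 'I_m -> 'I_m -> {mpoly k[n * n]}) (N : nat)
  (X : 'M[k]_n) : 'M[k]_m :=
  \matrix_(i, j)
    (let f := mmap polyC (fun t => mxvec (curveI X) 0 t) (P i j) in
     let d := \det (curveI X) ^+ N in
     (f^`().[0] * d.[0] - f.[0] * d^`().[0]) / d.[0] ^+ 2).

Definition is_rep (P : 'I_m -> 'I_m -> {mpoly k[n * n]}) (N : nat) : Prop :=
  ratrep P N 1%:M = 1%:M /\
  forall g h : 'M[k]_n, g \in unitmx -> h \in unitmx ->
    ratrep P N (g *m h) = ratrep P N g *m ratrep P N h.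

(* M = column vectors k^m, g.v = rho(g) v.  A subspace is encoded by a matrix
   whose row space is the set of transposes of its vectors. *)
Definition stable_sub (P : 'I_m -> 'I_m -> {mpoly k[n * n]}) (N : nat)
  (U : 'M[k]_m) : Prop :=
  forall g : 'M[k]_n, g \in unitmx -> (U *m (ratrep P N g)^T <= U)%MS.

Definition irr_sub P N (U : 'M[k]_m) : Prop :=
  [/\ stable_sub P N U, (0 < \rank U)%N &
      forall V : 'M[k]_m, stable_sub P N V -> (V <= U)%MS ->
        (V == (0 : 'M[k]_m))%MS \/ (V == U)%MS].

Definition irreducible_mod P N : Prop := irr_sub P N 1%:M.

Definition compl_reducible P N : Prop :=
  exists (r : nat) (U : 'I_r -> 'M[k]_m),
    [/\ forall i, irr_sub P N (U i),
        mxdirect (\sum_(i < r) U i) &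
        (\sum_(i < r) U i == 1%:M)%MS].

Definition nilcone (X : 'M[k]_n) : Prop := exists r : nat, X ^+ r = 0.

Definition Ad_semi P N (g : 'M[k]_n) (v : 'cV[k]_m)
  (Xw : 'M[k]_n * 'cV[k]_m) : 'M[k]_n * 'cV[k]_m :=
  let Y := g *m Xw.1 *m invmx g in
  (Y, - (dratrep P N Y *m v) + ratrep P N g *m Xw.2).

Definition finitely_many_orbits P N : Prop :=
  exists s : seq ('M[k]_n * 'cV[k]_m),
    forall x : 'M[k]_n * 'cV[k]_m, nilcone x.1 ->
      exists2 y, y \in s &
        exists (g : 'M[k]_n) (v : 'cV[k]_m), g \in unitmx /\ x = Ad_semi P N g v y.

End RatRep.

From HB Require Import structures.
From mathcomp Require Import all_boot all_order all_algebra.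
From mathcomp Require Import mpoly.
From Stdlib Require Import Classical.
Set Implicit Arguments. Unset Strict Implicit. Unset Printing Implicit Defensive.
Import GRing.Theory.
Local Open Scope ring_scope.

(* Let [J] be the regular nilpotent matrix and [dJ = d rho (J)].  If [(J, w)] and
   [(J, w')] lie in one orbit, then [w' = rho c w] modulo [Im dJ] for some [c] in the
   centraliser of [J]; this centraliser is commutative and consists of the matrices
   [t (1 + Y)] with [Y] strictly lower triangular.  A common eigenvector [l] of the
   centraliser acting on the linear forms vanishing on [Im dJ] has character
   [c |-> t ^ a] for an integer [a]: the unipotent part acts trivially because a
   polynomial without roots is constant, the scalars by a monomial because a polynomial
   vanishing only at [0] is one.  Such forms are nonzero on each irreducible summand:
   [rho (diag (1, t, .., t ^ (n-1)))] conjugates [dJ] into [t dJ], so [dJ] is nilpotent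
   on every submodule.  Two irreducible summands give two forms [l1], [l2] with
   characters [t ^ a1], [t ^ a2], and the one-dimensional group of the [t] cannot have
   finitely many orbits on the plane of values [(l1 w, l2 w)]. *)

Section ClosedFieldPoly.
Variable k : closedFieldType.
Implicit Types p q : {poly k}.

Lemma poly_horner_eq0 p : (forall u, p.[u] = 0) -> p = 0.
Proof.
move=> p0; apply/eqP; apply/negPn/negP => /closed_nonrootP [x].
by rewrite /root p0 eqxx.
Qed.

Lemma poly_eq_horner p q : (forall u, p.[u] = q.[u]) -> p = q.
Proof.
move=> pq; apply/eqP; rewrite -subr_eq0; apply/eqP/poly_horner_eq0 => u.
by rewrite hornerD hornerN pq subrr.
Qed.

Lemma nonroot_horner_const p : (forall u, p.[u] != 0) -> forall u v, p.[u] = p.[v].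
Proof.
move=> p_neq0; suff /size1_polyC -> : (size p <= 1)%N by move=> u v; rewrite !hornerC.
rewrite leqNgt; apply/negP => p_gt1.
have /closed_rootP [x] : size p != 1 by rewrite neq_ltn p_gt1 orbT.
by rewrite /root (negbTE (p_neq0 x)).
Qed.

Lemma root0_horner_monomial p : (forall u, u != 0 -> p.[u] != 0) ->
  exists e, forall u, p.[u] = p.[1] * u ^+ e.
Proof.
move=> p_neq0; have [r pE] := closed_field_poly_normal p.
have r0 z : z \in r -> z = 0.
  move=> zr; apply/eqP; apply/negPn/negP => /p_neq0; rewrite pE hornerZ.
  by rewrite horner_prod (big_rem z zr) /= hornerXsubC subrr mul0r mulr0 eqxx.
have {}pE u : p.[u] = lead_coef p * u ^+ size r.
  rewrite [in LHS]pE hornerZ horner_prod; congr (_ * _).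
  elim: r r0 {pE} => [|z r IHr] r0; first by rewrite big_nil.
  rewrite big_cons IHr => [|y yr]; last by apply: r0; rewrite inE yr orbT.
  by rewrite hornerXsubC (r0 z (mem_head _ _)) subr0 exprS.
by exists (size r) => u; rewrite !pE expr1n mulr1.
Qed.

(* A set on which [z ^+ d] is constant lies in the roots of ['X^d - c]. *)
Lemma pow_fibers_not_cover (T : eqType) (O : T -> k -> Prop) (d : nat) (s : seq T) :
  (0 < d)%N -> (forall y z z', O y z -> O y z' -> z ^+ d = z' ^+ d) ->
  ~ (forall z, exists2 y, y \in s & O y z).
Proof.
move=> d_gt0 Od.
suff [Q Q_neq0 Q0] : exists2 Q : {poly k}, Q != 0 &
    forall z, (exists2 y, y \in s & O y z) -> Q.[z] = 0.
  by move=> cover; move: Q_neq0; rewrite (poly_horner_eq0 (fun z => Q0 z (cover z))) eqxx.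
elim: s => [|y s [Q Q_neq0 Q0]]; first by exists 1; [exact: oner_neq0 | move=> z []].
have [[z0 Oz0] | noO] := classic (exists z0, O y z0).
  exists (Q * ('X^d - (z0 ^+ d)%:P)).
    by rewrite mulf_neq0 // -size_poly_eq0 size_XnsubC.
  move=> z [y' /predU1P [-> Oz | ys Oz]]; rewrite hornerM.
    by rewrite hornerD hornerN hornerXn hornerC (Od _ _ _ Oz Oz0) subrr mulr0.
  by rewrite Q0 ?mul0r //; exists y'.
exists Q => // z [y' /predU1P [-> Oz | ys Oz]]; first by case: noO; exists z.
by apply: Q0; exists y'.
Qed.

End ClosedFieldPoly.

(* [(e1 - K) + (K - e1)] is [|e1 - K|], with truncated subtraction. *)
Lemma expr_ratio_eq1 (F : fieldType) (t : F) e1 e2 K : t != 0 ->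
  t ^+ e1 / t ^+ K = 1 -> (t ^+ e2 / t ^+ K) ^+ ((e1 - K) + (K - e1)) = 1.
Proof.
move=> t0 te1; set d := ((e1 - K) + (K - e1))%N.
suff td : t ^+ d = 1.
  by rewrite exprMn exprVn -!exprM mulnC [(K * d)%N]mulnC !exprM td !expr1n invr1 mulr1.
rewrite /d; case: (leqP K e1) => [Ke1 | e1K].
  move: te1; have -> : (K - e1 = 0)%N by apply/eqP; rewrite subn_eq0.
  by rewrite addn0 -{1}(subnK Ke1) exprD mulfK ?expf_neq0.
move: te1; have -> : (e1 - K = 0)%N by apply/eqP; rewrite subn_eq0 ltnW.
rewrite add0n -{1}(subnK (ltnW e1K)) exprD invfM mulrCA mulfV ?expf_neq0 // mulr1.
by move/(congr1 GRing.inv); rewrite invrK invr1.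
Qed.

Lemma horner_mmap (R : comNzRingType) (r : nat) (h : 'I_r -> {poly R})
    (p : {mpoly R[r]}) (u : R) :
  (mmap polyC h p).[u] = p.@[fun i => (h i).[u]].
Proof.
rewrite /mmap mevalE horner_sum; apply: eq_bigr => x _.
rewrite hornerM hornerC /mmap1; congr (_ * _).
rewrite (big_morph (fun p : {poly R} => p.[u]) (fun a b => hornerM a b u) (hornerC 1 u)).
by apply: eq_bigr => i _; rewrite horner_exp.
Qed.

Section PolyMatrix.
Variable R : comNzRingType.

Definition hornermx (u : R) a b (M : 'M[{poly R}]_(a, b)) := map_mx (horner_eval u) M.

Lemma hornermxM u a b c (X : 'M[{poly R}]_(a, b)) (Y : 'M[{poly R}]_(b, c)) :
  hornermx u (X *m Y) = hornermx u X *m hornermx u Y.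
Proof. exact: map_mxM. Qed.

Lemma hornermxC u a b (C : 'M[R]_(a, b)) : hornermx u (map_mx polyC C) = C.
Proof. by apply/matrixP => i j; rewrite !mxE /= horner_evalE hornerC. Qed.

Lemma hornermx_tr u a b (X : 'M[{poly R}]_(a, b)) : hornermx u X^T = (hornermx u X)^T.
Proof. by rewrite /hornermx map_trmx. Qed.

Definition deriv0mx a b (M : 'M[{poly R}]_(a, b)) := map_mx (fun p => p^`().[0]) M.

Lemma deriv0mx_mulCl a b c (C : 'M[R]_(a, b)) (X : 'M[{poly R}]_(b, c)) :
  deriv0mx (map_mx polyC C *m X) = C *m deriv0mx X.
Proof.
apply/matrixP => i j; rewrite !mxE raddf_sum horner_sum; apply: eq_bigr => l _.
by rewrite !mxE /= derivM derivC mul0r add0r hornerM hornerC.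
Qed.

Lemma deriv0mx_mulCr a b c (C : 'M[R]_(b, c)) (X : 'M[{poly R}]_(a, b)) :
  deriv0mx (X *m map_mx polyC C) = deriv0mx X *m C.
Proof.
apply/matrixP => i j; rewrite !mxE raddf_sum horner_sum; apply: eq_bigr => l _.
by rewrite !mxE /= derivM derivC mulr0 addr0 hornerM hornerC.
Qed.

Lemma deriv0mx_tr a b (X : 'M[{poly R}]_(a, b)) : deriv0mx X^T = (deriv0mx X)^T.
Proof. by apply/matrixP => i j; rewrite !mxE. Qed.

Lemma deriv0mx_comp_scale a b t (X : 'M[{poly R}]_(a, b)) :
  deriv0mx (map_mx (comp_poly (t *: 'X)) X) = t *: deriv0mx X.
Proof.
apply/matrixP => i j; rewrite !mxE /= deriv_comp hornerM horner_comp derivZ derivX.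
by rewrite !hornerZ hornerX mulr0 hornerC mulr1 mulrC.
Qed.

End PolyMatrix.

Lemma polymx_eq_hornermx (k : closedFieldType) a b (X Y : 'M[{poly k}]_(a, b)) :
  (forall u, hornermx u X = hornermx u Y) -> X = Y.
Proof.
move=> XY; apply/matrixP => i j; apply: poly_eq_horner => u.
by have /matrixP /(_ i j) := XY u; rewrite !mxE.
Qed.

Section ClosedEigen.
Variable k : closedFieldType.

Lemma closed_eigenvalue r (A : 'M[k]_r) : (0 < r)%N -> exists a, eigenvalue A a.
Proof.
move=> r_gt0; have /closed_rootP [a rAa] : size (char_poly A) != 1%N.
  by rewrite size_char_poly; case: (r) r_gt0.
by exists a; rewrite eigenvalue_root_char.
Qed.

(* Induction on the dimension: either some member has a proper eigenspace, which
   every member stabilises, or every member acts as a scalar. *)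
Lemma comm_mx_family_eigenvector r (S : 'M[k]_r -> Prop) : (0 < r)%N ->
  (forall A B, S A -> S B -> A *m B = B *m A) ->
  exists2 v : 'rV[k]_r, v != 0 & forall A, S A -> stablemx v A.
Proof.
elim/ltn_ind: r S => r IHr S r_gt0 S_comm.
have [[A [a [SA [Aa Ea_lt]]]] | no_proper] :=
  classic (exists A a, S A /\ eigenvalue A a /\ (\rank (eigenspace A a) < r)%N).
  pose E := eigenspace A a.
  have E_gt0 : (0 < \rank E)%N by rewrite lt0n mxrank_eq0.
  have stE B : S B -> stablemx E B.
    by move=> SB; apply: comm_mx_stable_eigenspace; apply: S_comm.
  pose SE B' := exists2 B, S B & B' = restrictmx E B.
  have [v v_neq0 v_eig] : exists2 v : 'rV[k]_(\rank E), v != 0 &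
      forall B', SE B' -> stablemx v B'.
    apply: (IHr _ Ea_lt SE E_gt0) => _ _ [B SB ->] [B' SB' ->].
    by rewrite -!conjmxM ?inE ?stablemx_row_base ?stE // S_comm.
  exists (v *m row_base E); first by rewrite mulmx_free_eq0 ?row_base_free.
  by move=> B SB; rewrite -stablemx_restrict ?stE //; apply: v_eig; exists B.
pose i0 : 'I_r := Ordinal r_gt0.
exists (delta_mx 0 i0).
  apply/negP => /eqP /matrixP /(_ 0 i0); rewrite !mxE !eqxx /= => /eqP.
  by rewrite oner_eq0.
move=> A SA; have [a Aa] := closed_eigenvalue A r_gt0.
have Ea_full : row_full (eigenspace A a).
  rewrite /row_full eqn_leq rank_leq_col leqNgt; apply/negP => Ea_lt.
  by apply: no_proper; exists A, a.
have /eigenspaceP -> : ((delta_mx 0 i0 : 'rV[k]_r) <= eigenspace A a)%MS.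
  exact: submx_full.
exact: scalemx_sub.
Qed.

End ClosedEigen.

Definition strict_lower (R : nmodType) n (B : 'M[R]_n) :=
  forall i j : 'I_n, (i <= j)%N -> B i j = 0.

Lemma strict_lower_map (R S : nmodType) n (f : R -> S) (B : 'M[R]_n) :
  f 0 = 0 -> strict_lower B -> strict_lower (map_mx f B).
Proof. by move=> f0 B0 i j ij; rewrite mxE B0. Qed.

Section NilJordan.
Variables (R : comNzRingType) (n : nat).
Implicit Types B : 'M[R]_n.

Lemma strict_lowerZ a B : strict_lower B -> strict_lower (a *: B).
Proof. by move=> B0 i j ij; rewrite mxE B0 ?mulr0. Qed.

Lemma det_1_strict_lower B : strict_lower B -> \det (1%:M + B) = 1.
Proof.
move=> B0; rewrite det_trig.
  by rewrite big1 // => i _; rewrite !mxE B0 // eqxx addr0.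
apply/is_trig_mxP => i j ij; rewrite !mxE B0 ?(ltnW ij) // addr0.
by rewrite -val_eqE /= (ltn_eqF ij).
Qed.

Definition nilJ : 'M[R]_n := \matrix_(i, j) (i == j.+1 :> nat)%:R.
Local Notation J := nilJ.

Lemma strict_lower_nilJ : strict_lower J.
Proof. by move=> i j ij; rewrite mxE; case: eqP => // iE; move: ij; rewrite iE ltnn. Qed.

Lemma sum_ord_delta (o : 'I_n) (F : 'I_n -> R) :
  \sum_(l < n) (l == o :> nat)%:R * F l = F o.
Proof.
rewrite (bigD1 o) //= eqxx mul1r big1 ?addr0 // => l /eqP lo.
by case: eqP => [/val_inj // | _]; rewrite mul0r.
Qed.

Lemma sum_ord_delta_out (c : nat) (F : 'I_n -> R) : (n <= c)%N ->
  \sum_(l < n) (l == c :> nat)%:R * F l = 0.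
Proof.
move=> nc; rewrite big1 // => l _; case: eqP => [lc | _]; last by rewrite mul0r.
by move: (ltn_ord l); rewrite lc ltnNge nc.
Qed.

Lemma nilJ_pow i : J ^+ i = \matrix_(a, b) (a == (b + i)%N :> nat)%:R.
Proof.
elim: i => [|i IHi]; apply/matrixP => a b; first by rewrite expr0 !mxE addn0.
rewrite exprSr -mulmxE IHi !mxE.
under eq_bigr => l _ do rewrite !mxE mulrC.
case: (ltnP b.+1 n) => bn; first by rewrite (sum_ord_delta (Ordinal bn)) -addSnnS.
rewrite sum_ord_delta_out //; case: eqP => // aE.
by move: (ltn_ord a); rewrite aE -addSnnS ltnNge (leq_trans bn (leq_addr _ _)).
Qed.

Lemma nilJ_nilpotent : J ^+ n = 0.
Proof.
apply/matrixP => a b; rewrite nilJ_pow !mxE.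
by case: eqP => // aE; move: (ltn_ord a); rewrite aE ltnNge leq_addl.
Qed.

Definition centJ (c : 'M[R]_n) := c *m J = J *m c.

Lemma centJ_pow c i : centJ c -> c *m J ^+ i = J ^+ i *m c.
Proof.
move=> cJ; elim: i => [|i IHi]; first by rewrite expr0 mulmx1 mul1mx.
by rewrite exprSr -mulmxE mulmxA IHi -!mulmxA cJ.
Qed.

Section FirstColumn.
Hypothesis n_gt0 : (0 < n)%N.
Local Notation i0 := (Ordinal n_gt0).

Lemma centJ_entry c : centJ c ->
  forall a b, c a b = \sum_(l < n) (a == (l + b)%N :> nat)%:R * c l i0.
Proof.
move=> cJ a b; have /matrixP /(_ a i0) := centJ_pow b cJ.
rewrite nilJ_pow !mxE; under eq_bigr => j _ do rewrite mxE mulrC /= add0n.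
by rewrite sum_ord_delta => ->; apply: eq_bigr => l _; rewrite mxE.
Qed.

Lemma centJ_polyJ c : centJ c -> c = \sum_(i < n) c i i0 *: J ^+ i.
Proof.
move=> cJ; apply/matrixP => a b; rewrite (centJ_entry cJ) summxE.
by apply: eq_bigr => l _; rewrite nilJ_pow !mxE mulrC addnC.
Qed.

Lemma centJ_diag c : centJ c -> forall a, c a a = c i0 i0.
Proof.
move=> cJ a; rewrite (centJ_entry cJ) -[in RHS](sum_ord_delta i0 (fun l => c l i0)).
by apply: eq_bigr => l _; rewrite -{1}[nat_of_ord a]add0n eqn_add2r eq_sym.
Qed.

Lemma centJ_upper0 c : centJ c -> forall a b : 'I_n, (a < b)%N -> c a b = 0.
Proof.
move=> cJ a b ab; rewrite (centJ_entry cJ) big1 // => l _.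
by case: eqP => [aE | _]; [move: ab; rewrite aE ltnNge leq_addl | rewrite mul0r].
Qed.

End FirstColumn.

Lemma centJ_comm c c' : centJ c -> centJ c' -> c *m c' = c' *m c.
Proof.
case: (posnP n) => [n0 | n_gt0] cJ c'J.
  by apply/matrixP => i; have := ltn_ord i; rewrite {2}n0.
rewrite (centJ_polyJ n_gt0 cJ) mulmx_suml mulmx_sumr; apply: eq_bigr => i _.
by rewrite -scalemxAl -scalemxAr centJ_pow.
Qed.

End NilJordan.

Lemma unitmx_1_strict_lower (R : comUnitRingType) n (B : 'M[R]_n) :
  strict_lower B -> (1%:M + B) \in unitmx.
Proof. by move=> B0; rewrite unitmxE det_1_strict_lower ?unitr1. Qed.

Section FieldCentralizer.
Variables (F : fieldType) (n : nat).
Local Notation J := (nilJ F n).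

Lemma centJ_decomp (n_gt0 : (0 < n)%N) (c : 'M[F]_n) : c \in unitmx -> centJ c ->
  let t := c (Ordinal n_gt0) (Ordinal n_gt0) in
  t != 0 /\ exists2 Y, strict_lower Y /\ centJ Y & c = t *: (1%:M + Y).
Proof.
move=> cu cJ t; have ct := centJ_diag n_gt0 cJ.
have t_neq0 : t != 0.
  move: cu; rewrite unitmxE det_trig; last first.
    by apply/is_trig_mxP => i j ij; apply: (centJ_upper0 n_gt0 cJ).
  under eq_bigr => a _ do rewrite ct.
  by rewrite prodr_const card_ord unitfE expf_eq0 n_gt0.
split=> //; exists (t^-1 *: c - 1%:M); last by rewrite addrC subrK scalerA divff // scale1r.
split; last by rewrite /centJ mulmxBl mulmxBr mul1mx mulmx1 -!scalemxAl -scalemxAr cJ.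
move=> a b; rewrite leq_eqVlt => /orP [/eqP/val_inj ab | ab]; rewrite !mxE.
  by rewrite ab ct eqxx mulVf // subrr.
have /negbTE -> : a != b by rewrite -val_eqE /= neq_ltn ab.
by rewrite (centJ_upper0 n_gt0 cJ ab) mulr0 subrr.
Qed.

Definition diag_powers (t : F) : 'M[F]_n := diag_mx (\row_(i < n) t ^+ i).

Lemma diag_powers_unit t : t != 0 -> diag_powers t \in unitmx.
Proof.
move=> t0; rewrite unitmxE det_diag unitfE prodf_seq_neq0; apply/allP => i _ /=.
by rewrite mxE expf_neq0.
Qed.

Lemma diag_powers_nilJ t : diag_powers t *m J = t *: (J *m diag_powers t).
Proof.
apply/matrixP => i j; rewrite mul_diag_mx mul_mx_diag !mxE.
case: (i == j.+1 :> nat) /eqP => [-> | _]; last by rewrite !mulr0 mul0r mulr0.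
by rewrite mulr1 mul1r exprS.
Qed.

End FieldCentralizer.
Arguments diag_powers {F n} t.

Lemma unitmx_eigenvalue_neq0 (F : fieldType) r (A : 'M[F]_r) (l : 'rV[F]_r) a :
  l != 0 -> A \in unitmx -> l *m A = a *: l -> a != 0.
Proof.
move=> l0 Au lA; apply/eqP => a0; move: lA; rewrite a0 scale0r => /eqP.
by rewrite mulmx_free_eq0 ?row_free_unit // (negbTE l0).
Qed.

Lemma mul_annih_sub (F : fieldType) a r (V : 'M[F]_(a, r)) (l : 'rV[F]_r) (w : 'cV[F]_r) :
  l *m V^T = 0 -> (w^T <= V)%MS -> l *m w = 0.
Proof. by move=> lV /submxP [X wE]; rewrite -[w]trmxK wE trmx_mul mulmxA lV mul0mx. Qed.

Lemma sub_dual_vector (F : fieldType) a r (V : 'M[F]_(a, r)) (l : 'rV[F]_r) :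
  V *m l^T != 0 -> exists2 w : 'cV[F]_r, (w^T <= V)%MS & l *m w = 1%:M.
Proof.
move=> /cV0Pn [i Vli]; exists (((V *m l^T) i 0)^-1 *: (row i V)^T).
  by rewrite linearZ /= trmxK scalemx_sub // row_sub.
have lV : (l *m (row i V)^T) 0 0 = (V *m l^T) i 0.
  by rewrite !mxE; apply: eq_bigr => j _; rewrite !mxE mulrC.
by apply/matrixP => ? ?; rewrite !ord1 -scalemxAr mxE lV mulVf // mxE.
Qed.

Section Representation.
Variables (k : closedFieldType) (n m : nat).
Variables (P : 'I_m -> 'I_m -> {mpoly k[n * n]}) (N : nat).
Local Notation rho := (ratrep P N).
Local Notation J := (nilJ k n).

Definition linemx (A B : 'M[k]_n) : 'M[{poly k}]_n :=
  map_mx polyC A + 'X *: map_mx polyC B.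

Definition ratrep_num (A B : 'M[k]_n) : 'M[{poly k}]_m :=
  \matrix_(i, j) mmap polyC (fun t => mxvec (linemx A B) 0 t) (P i j).

Lemma hornermx_linemx u A B : hornermx u (linemx A B) = A + u *: B.
Proof.
apply/matrixP => i j; rewrite !mxE /= horner_evalE hornerD hornerC.
by rewrite hornerM hornerX hornerC.
Qed.

Lemma ratrep_line u A B :
  rho (A + u *: B) = (\det (A + u *: B) ^+ N)^-1 *: hornermx u (ratrep_num A B).
Proof.
apply/matrixP => i j; rewrite !mxE /= horner_evalE horner_mmap mulrC; congr (_ * _).
apply: meval_eq => t; rewrite -hornermx_linemx /hornermx -map_mxvec.
by rewrite mxE.
Qed.

Lemma ratrep_line_det1 u A B :
  \det (A + u *: B) = 1 -> rho (A + u *: B) = hornermx u (ratrep_num A B).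
Proof. by move=> det1; rewrite ratrep_line det1 expr1n invr1 scale1r. Qed.

Lemma dratrep_strict_lower B :
  strict_lower B -> dratrep P N B = deriv0mx (ratrep_num 1%:M B).
Proof.
move=> B0; have linemxE : linemx 1%:M B = curveI B by rewrite /linemx map_mx1.
have det1 : \det (curveI B) = 1.
  apply/det_1_strict_lower/strict_lowerZ; exact: strict_lower_map B0.
apply/matrixP => i j; rewrite !mxE /= linemxE det1 expr1n -polyC1 derivC !hornerC.
by rewrite mulr0 subr0 expr1n invr1 !mulr1.
Qed.

Section Homomorphism.
Hypothesis rho_rep : is_rep P N.

Lemma ratrep1 : rho 1%:M = 1%:M.
Proof. by case: rho_rep. Qed.

Lemma ratrepM g h : g \in unitmx -> h \in unitmx -> rho (g *m h) = rho g *m rho h.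
Proof. by case: rho_rep => _; apply. Qed.

Lemma ratrep_unitmx g : g \in unitmx -> rho g \in unitmx.
Proof.
move=> gu; apply: (proj1 (@mulmx1_unit _ _ _ (rho (invmx g)) _)).
by rewrite -ratrepM ?unitmx_inv // mulmxV // ratrep1.
Qed.

Definition dJ := dratrep P N J.

Lemma dJE : dJ = deriv0mx (ratrep_num 1%:M J).
Proof. exact/dratrep_strict_lower/strict_lower_nilJ. Qed.

Lemma unitmx_1J u : (1%:M + u *: J) \in unitmx.
Proof. exact/unitmx_1_strict_lower/strict_lowerZ/strict_lower_nilJ. Qed.

Lemma ratrep_1J u : rho (1%:M + u *: J) = hornermx u (ratrep_num 1%:M J).
Proof. exact/ratrep_line_det1/det_1_strict_lower/strict_lowerZ/strict_lower_nilJ. Qed.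

Lemma ratrep_centJ_dJ c : c \in unitmx -> centJ c -> rho c *m dJ = dJ *m rho c.
Proof.
move=> cu cJ; suff numE : map_mx polyC (rho c) *m ratrep_num 1%:M J =
    ratrep_num 1%:M J *m map_mx polyC (rho c).
  by rewrite dJE -deriv0mx_mulCl numE deriv0mx_mulCr.
apply: polymx_eq_hornermx => u.
rewrite !hornermxM !hornermxC -ratrep_1J -!ratrepM ?unitmx_1J //.
by rewrite mulmxDr mulmxDl mulmx1 mul1mx -!scalemxAr -scalemxAl cJ.
Qed.

(* Differentiate [U rho (1 + u J)^T <= U] at [u = 0]. *)
Lemma stable_dJ U : stable_sub P N U -> stablemx U dJ^T.
Proof.
move=> Ustab; rewrite submxE.
have numE : map_mx polyC U *m (ratrep_num 1%:M J)^T *m map_mx polyC (cokermx U) = 0.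
  apply: polymx_eq_hornermx => u; rewrite !hornermxM !hornermxC hornermx_tr -ratrep_1J.
  have := Ustab _ (unitmx_1J u); rewrite submxE => /eqP ->.
  by apply/matrixP => i j; rewrite !mxE /= horner_evalE horner0.
have := congr1 (@deriv0mx _ _ _) numE.
rewrite deriv0mx_mulCr deriv0mx_mulCl deriv0mx_tr -dJE => ->.
by apply/eqP/matrixP => i j; rewrite !mxE deriv0 horner0.
Qed.

Lemma ratrep_diag_powers_dJ t : t != 0 ->
  rho (diag_powers t) *m dJ = t *: (dJ *m rho (diag_powers t)).
Proof.
move=> t0; pose G := map_mx (comp_poly (t *: 'X)) (ratrep_num 1%:M J).
have numE : map_mx polyC (rho (diag_powers t)) *m ratrep_num 1%:M J =
    G *m map_mx polyC (rho (diag_powers t)).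
  apply: polymx_eq_hornermx => u; rewrite !hornermxM !hornermxC.
  have -> : hornermx u G = rho (1%:M + (t * u) *: J).
    rewrite ratrep_1J; apply/matrixP => i j.
    by rewrite !mxE /= !horner_evalE horner_comp hornerZ hornerX.
  rewrite -ratrep_1J -!ratrepM ?unitmx_1J ?diag_powers_unit //.
  rewrite mulmxDr mulmxDl mulmx1 mul1mx -!scalemxAr diag_powers_nilJ.
  by rewrite scalerA mulrC scalemxAl.
by rewrite dJE -deriv0mx_mulCl numE deriv0mx_mulCr deriv0mx_comp_scale scalemxAl.
Qed.

(* Conjugating by [rho (diag_powers t)] scales [dJ^T] by [t], so a nonzero eigenvalue would
   make every nonzero scalar an eigenvalue. *)
Lemma dJ_eigenvalue0 mu : eigenvalue dJ^T mu -> mu = 0.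
Proof.
move=> /eigenvalueP [v vD v0]; apply/eqP/negPn/negP => mu0.
have all_eig z : z != 0 -> root (char_poly dJ^T) z.
  move=> z0; rewrite -eigenvalue_root_char.
  pose t := z / mu; have t0 : t != 0 by rewrite mulf_neq0 ?invr_eq0.
  pose R := (rho (diag_powers t))^T.
  have Ru : R \in unitmx by rewrite unitmx_tr ratrep_unitmx // diag_powers_unit.
  have RD : invmx R *m dJ^T = t *: (dJ^T *m invmx R).
    have DR : dJ^T *m R = t *: (R *m dJ^T).
      by rewrite /R -!trmx_mul ratrep_diag_powers_dJ // linearZ.
    rewrite -[LHS]mulmx1 -(mulmxV Ru) mulmxA -[invmx R *m dJ^T *m R]mulmxA DR.
    by rewrite -scalemxAr !mulmxA mulVmx // mul1mx -scalemxAl.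
  apply/eigenvalueP; exists (v *m invmx R).
    by rewrite -mulmxA RD -scalemxAr mulmxA vD -scalemxAl scalerA /t mulfVK.
  by rewrite mulmx_free_eq0 // row_free_unit unitmx_inv.
have : 'X * char_poly dJ^T = 0.
  apply: poly_horner_eq0 => u; rewrite hornerM hornerX.
  have [-> | u0] := eqVneq u 0; first by rewrite mul0r.
  by rewrite (rootP (all_eig u u0)) mulr0.
apply/eqP; rewrite mulf_eq0 polyX_eq0 /=.
exact/monic_neq0/char_poly_monic.
Qed.

Lemma stable_dJ_kernel U : stable_sub P N U -> (0 < \rank U)%N ->
  exists2 u : 'rV[k]_m, u != 0 & (u <= U)%MS /\ u *m dJ^T = 0.
Proof.
move=> Ustab U_gt0; pose V := row_base U.
have Vstab : stablemx V dJ^T.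
  rewrite /V !eq_row_base (submx_trans _ (stable_dJ Ustab)) //.
  by rewrite submxMr // eq_row_base.
have [a Aa] := closed_eigenvalue (conjmx V dJ^T) U_gt0.
have a0 := dJ_eigenvalue0 (eigenvalue_conjmx Vstab (row_base_free U) Aa).
move: Aa; rewrite a0 => /eigenvalueP [x xA x0].
have : (x <= eigenspace (conjmx V dJ^T) 0)%MS by apply/eigenspaceP.
rewrite sub_eigenspace_conjmx ?row_base_free // => /eigenspaceP xD.
exists (x *m V); first by rewrite mulmx_free_eq0 // row_base_free.
split; first by rewrite /V (submx_trans (submxMl _ _)) // eq_row_base.
by rewrite xD scale0r.
Qed.

Lemma rank_stable_dJ U : stable_sub P N U -> (0 < \rank U)%N ->
  (\rank (U *m dJ^T) < \rank U)%N.
Proof.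
move=> Ustab U_gt0; have [u u0 [uU uD]] := stable_dJ_kernel Ustab U_gt0.
rewrite -(eqmxMr _ (eq_row_base U)) ltnNge; apply/negP => rank_ge.
have free : row_free (row_base U *m dJ^T).
  by rewrite /row_free eqn_leq rank_ge andbT (leq_trans (mxrankM_maxl _ _)) ?rank_leq_row.
have /submxP [x uE] : (u <= row_base U)%MS by rewrite eq_row_base.
move: uD; rewrite uE -mulmxA => /eqP; rewrite mulmx_free_eq0 // => /eqP x0.
by move: u0; rewrite uE x0 mul0mx eqxx.
Qed.

(* The dual of [M / (Im dJ + V)], as a row space. *)
Definition annihJ (V : 'M[k]_m) := kermx (row_mx dJ V^T).

Lemma sub_annihJ a (L : 'M[k]_(a, m)) V :
  (L <= annihJ V)%MS -> L *m dJ = 0 /\ L *m V^T = 0.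
Proof.
move/sub_kermxP; rewrite mul_mx_row => /eqP.
by rewrite row_mx_eq0 => /andP [/eqP -> /eqP ->].
Qed.

Lemma annihJ_stable V c : stable_sub P N V -> c \in unitmx -> centJ c ->
  stablemx (annihJ V) (rho c).
Proof.
move=> Vstab cu cJ; have [LD LV] := sub_annihJ (submx_refl (annihJ V)).
apply/sub_kermxP; rewrite mul_mx_row -mulmxA ratrep_centJ_dJ // mulmxA LD mul0mx.
have /submxP [X VX] := Vstab c cu.
have VcV : rho c *m V^T = V^T *m X^T by rewrite -trmx_mul -VX trmx_mul trmxK.
by rewrite -mulmxA VcV mulmxA LV mul0mx row_mx0.
Qed.

Lemma annihJ_rank_gt0 U V : stable_sub P N U -> stable_sub P N V ->
  (1%:M <= U + V)%MS -> (\rank U + \rank V <= m)%N -> (0 < \rank U)%N ->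
  (0 < \rank (annihJ V))%N.
Proof.
move=> Ustab Vstab UV rankUV U_gt0.
rewrite mxrank_ker subn_gt0 -mxrank_tr tr_row_mx trmxK.
have sub : (col_mx dJ^T V <= U *m dJ^T + V)%MS.
  rewrite col_mx_sub addsmxSr andbT -{1}[dJ^T]mul1mx (submx_trans (submxMr _ UV)) //.
  by rewrite addsmxMr addsmxS // stable_dJ.
apply: leq_ltn_trans (mxrankS sub) _; apply: leq_ltn_trans (mxrank_adds_leqif _ _).1 _.
by apply: leq_trans rankUV; rewrite ltn_add2r rank_stable_dJ.
Qed.

Lemma annihJ_mul_neq0 (U V : 'M[k]_m) (l : 'rV[k]_m) :
  (1%:M <= U + V)%MS -> (l <= annihJ V)%MS -> l != 0 -> U *m l^T != 0.
Proof.
move=> UV lL l0; have [_ lV] := sub_annihJ lL.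
apply: contraNneq l0 => Ul.
have /submxP [X XE] : (1%:M <= col_mx U V)%MS by rewrite -addsmxE.
have Vl : V *m l^T = 0 by rewrite -[V]trmxK -trmx_mul lV trmx0.
have : 1%:M *m l^T = 0 by rewrite XE -mulmxA mul_col_mx Ul Vl col_mx0 mulmx0.
by rewrite mul1mx => /(congr1 trmx); rewrite trmxK trmx0 => ->.
Qed.

End Homomorphism.
End Representation.

Section Characters.
Variables (k : closedFieldType) (n m : nat).
Variables (P : 'I_m -> 'I_m -> {mpoly k[n * n]}) (N : nat).
Hypothesis rho_rep : is_rep P N.
Local Notation rho := (ratrep P N).
Local Notation J := (nilJ k n).
Local Notation dJ := (dJ P N).

Definition cent_eigenvector (l : 'rV[k]_m) :=
  forall c, c \in unitmx -> centJ c -> exists a, l *m rho c = a *: l.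

Definition cent_character (l : 'rV[k]_m) (chi : 'M[k]_n -> k) :=
  forall c, c \in unitmx -> centJ c -> l *m rho c = chi c *: l.

Section Coordinate.
Variables (l : 'rV[k]_m) (j0 : 'I_m).
Hypotheses (l_j0 : l 0 j0 != 0) (l_eig : cent_eigenvector l).

Definition coord_poly A B := (map_mx polyC l *m ratrep_num P A B) 0 j0.

Lemma horner_coord_poly u A B :
  (coord_poly A B).[u] = (l *m hornermx u (ratrep_num P A B)) 0 j0.
Proof. by rewrite -[l in RHS](hornermxC u) -hornermxM /hornermx mxE. Qed.

Let l_neq0 : l != 0.
Proof. by apply/rV0Pn; exists j0. Qed.

(* The coordinate [j0] of [l rho (1 + u Y)] is a polynomial in [u] without roots,
   hence constant. *)
Lemma cent_eigenvector_unipotent Y : strict_lower Y -> centJ Y -> l *m rho (1%:M + Y) = l.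
Proof.
move=> Y0 YJ; have lineJ u : centJ (1%:M + u *: Y).
  by rewrite /centJ mulmxDl mulmxDr mul1mx mulmx1 -scalemxAl YJ scalemxAr.
have lineU u : (1%:M + u *: Y) \in unitmx by exact/unitmx_1_strict_lower/strict_lowerZ.
have line1 u : \det (1%:M + u *: Y) = 1 by exact/det_1_strict_lower/strict_lowerZ.
have nonroot u : (coord_poly 1%:M Y).[u] != 0.
  have [a la] := l_eig (lineU u) (lineJ u).
  rewrite horner_coord_poly -(ratrep_line_det1 P N) // la mxE mulf_neq0 //.
  exact: unitmx_eigenvalue_neq0 l_neq0 (ratrep_unitmx rho_rep (lineU u)) la.
have := nonroot_horner_const nonroot 1 0.
rewrite !horner_coord_poly -!(ratrep_line_det1 P N) // scale0r addr0.
rewrite ratrep1 // mulmx1 scale1r.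
have [a la] := l_eig (lineU 1) (lineJ 1); rewrite scale1r in la.
rewrite la mxE -[l 0 j0 in RHS]mul1r => /(mulIf l_j0) a1.
by rewrite a1 scale1r.
Qed.

(* The coordinate [j0] of [l rho (t 1)] is, up to [t ^+ (n * N)], a polynomial in [t]
   vanishing only at [0], hence a monomial. *)
Lemma cent_eigenvector_scalar :
  exists e, forall t, t != 0 -> l *m rho t%:M = (t ^+ e / t ^+ (n * N)) *: l.
Proof.
have lineE (t : k) : t%:M = 0 + t *: (1%:M : 'M[k]_n).
  by rewrite add0r scale_scalar_mx mulr1.
have coordE t : (l *m rho t%:M) 0 j0 = (t ^+ (n * N))^-1 * (coord_poly 0 1%:M).[t].
  rewrite horner_coord_poly {1}lineE (ratrep_line P N) -lineE.
  by rewrite det_scalar -exprM -scalemxAr mxE.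
have tU (t : k) : t != 0 -> (t%:M : 'M[k]_n) \in unitmx.
  by move=> t0; rewrite unitmxE det_scalar unitfE expf_neq0.
have tJ (t : k) : centJ (t%:M : 'M[k]_n) by rewrite /centJ scalar_mxC.
have coord_eig t : t != 0 -> exists2 a, a != 0 &
    (coord_poly 0 1%:M).[t] = t ^+ (n * N) * (a * l 0 j0).
  move=> t0; have [a la] := l_eig (tU t t0) (tJ t).
  exists a; first exact: unitmx_eigenvalue_neq0 l_neq0 (ratrep_unitmx rho_rep (tU t t0)) la.
  by move: (coordE t); rewrite la mxE => ->; rewrite mulrA mulfV ?mul1r ?expf_neq0.
have [|e coord_mono] := root0_horner_monomial (p := coord_poly 0 1%:M).
  by move=> t t0; have [a a0 ->] := coord_eig t t0; rewrite !mulf_neq0 ?expf_neq0.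
have coord1 : (coord_poly 0 1%:M).[1] = l 0 j0.
  by have := coordE 1; rewrite expr1n invr1 mul1r ratrep1 // mulmx1 => <-.
exists e => t t0; have [a la] := l_eig (tU t t0) (tJ t).
have := coordE t; rewrite la mxE coord_mono coord1 => aE.
suff -> : a = t ^+ e / t ^+ (n * N) by [].
by apply: (mulIf l_j0); rewrite aE mulrCA [RHS]mulrC [_ / _]mulrC.
Qed.

Lemma cent_eigenvector_character (n_gt0 : (0 < n)%N) : exists e,
  cent_character l (fun c => c (Ordinal n_gt0) (Ordinal n_gt0) ^+ e /
                             c (Ordinal n_gt0) (Ordinal n_gt0) ^+ (n * N)).
Proof.
have [e le] := cent_eigenvector_scalar; exists e => c cu cJ.
have [t0 [Y [Y0 YJ] cE]] := centJ_decomp n_gt0 cu cJ.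
have YU : (1%:M + Y) \in unitmx by exact: unitmx_1_strict_lower.
have tU : ((c (Ordinal n_gt0) (Ordinal n_gt0))%:M : 'M[k]_n) \in unitmx.
  by rewrite unitmxE det_scalar unitfE expf_neq0.
rewrite {1}cE -mul_scalar_mx ratrepM // mulmxA le // -scalemxAl.
by rewrite cent_eigenvector_unipotent.
Qed.

End Coordinate.

(* The characters are [t ^+ e_i / t ^+ (n * N)], with [t] the diagonal entry of [c].  If
   [e1 = n * N] then [chi1] is trivial; otherwise [chi1 c = 1] makes [t] a root of unity. *)
Lemma cent_eigenvector_character_pair l1 l2 : l1 != 0 -> l2 != 0 ->
  cent_eigenvector l1 -> cent_eigenvector l2 ->
  exists chi1 chi2 d, [/\ (0 < d)%N, cent_character l1 chi1, cent_character l2 chi2 &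
    (forall c, c \in unitmx -> centJ c -> chi1 c = 1 -> chi2 c ^+ d = 1) \/
    (forall c, c \in unitmx -> centJ c -> chi2 c = 1 -> chi1 c ^+ d = 1)].
Proof.
move=> /rV0Pn [j1 l1j1] /rV0Pn [j2 l2j2] l1eig l2eig.
have [n0 | n_gt0] := posnP n.
  have trivial_char l : cent_character l (fun=> 1).
    move=> c _ _; have -> : c = 1%:M.
      by apply/matrixP => i; have := ltn_ord i; rewrite {2}n0.
    by rewrite ratrep1 // mulmx1 scale1r.
  by exists (fun=> 1), (fun=> 1), 1%N; split; rewrite ?trivial_char //; left.
have [e1 chi1] := cent_eigenvector_character l1j1 l1eig n_gt0.
have [e2 chi2] := cent_eigenvector_character l2j2 l2eig n_gt0.
pose t (c : 'M[k]_n) := c (Ordinal n_gt0) (Ordinal n_gt0).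
pose chi e c := t c ^+ e / t c ^+ (n * N).
have t_neq0 c : c \in unitmx -> centJ c -> t c != 0.
  by move=> cu cJ; case: (centJ_decomp n_gt0 cu cJ).
have [e1K | e1K] := eqVneq e1 (n * N)%N.
  exists (chi e1), (chi e2), 1%N; split=> //; right => c cu cJ _.
  by rewrite /chi e1K divff ?expf_neq0 ?t_neq0.
exists (chi e1), (chi e2), ((e1 - n * N) + (n * N - e1))%N; split=> //; last left.
  by rewrite addn_gt0 !subn_gt0 orbC -neq_ltn.
by move=> c cu cJ; apply: expr_ratio_eq1; apply: t_neq0.
Qed.

Lemma same_orbit_nilJ g g' v v' y : g \in unitmx -> g' \in unitmx ->
  (Ad_semi P N g v y).1 = J -> (Ad_semi P N g' v' y).1 = J ->
  exists2 c, c \in unitmx /\ centJ c & forall l : 'rV[k]_m, l *m dJ = 0 ->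
    l *m (Ad_semi P N g' v' y).2 = l *m rho c *m (Ad_semi P N g v y).2.
Proof.
move=> gu g'u /= yJ y'J; set c := g' *m invmx g.
have cU : c \in unitmx by rewrite unitmx_mul g'u unitmx_inv.
have cJ : centJ c.
  have gJ : invmx g *m J = y.1 *m invmx g by rewrite -yJ !mulmxA mulVmx // mul1mx.
  have g'J : J *m g' = g' *m y.1 by rewrite -y'J mulmxKV.
  by rewrite /centJ -mulmxA gJ mulmxA -g'J mulmxA.
exists c => // l lD; rewrite yJ y'J -/dJ !mulmxDr !mulmxN !mulmxA lD.
rewrite -(mulmxA l (rho c) dJ) (ratrep_centJ_dJ rho_rep cU cJ) mulmxA lD.
rewrite !mul0mx oppr0 !add0r.
by rewrite -(mulmxA l (rho c) (rho g)) -(ratrepM rho_rep cU gu) mulmxKV.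
Qed.

(* On the line of points [(J, w1 + z w2)], two points in one orbit differ by a
   centraliser element [c] with [chi1 c = 1] and [z' = chi2 c * z]. *)
Lemma dependent_characters_infinite_orbits l1 l2 w1 w2 chi1 chi2 d :
  (0 < d)%N -> l1 *m dJ = 0 -> l2 *m dJ = 0 ->
  cent_character l1 chi1 -> cent_character l2 chi2 ->
  l1 *m w1 = 1%:M -> l1 *m w2 = 0 -> l2 *m w1 = 0 -> l2 *m w2 = 1%:M ->
  (forall c, c \in unitmx -> centJ c -> chi1 c = 1 -> chi2 c ^+ d = 1) ->
  ~ finitely_many_orbits P N.
Proof.
move=> d_gt0 l1D l2D chi1E chi2E l1w1 l1w2 l2w1 l2w2 chi12 [s cover].
pose pt z := (J, w1 + z *: w2).
have l1pt z : l1 *m (pt z).2 = 1%:M.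
  by rewrite mulmxDr -scalemxAr l1w1 l1w2 scaler0 addr0.
have l2pt z : l2 *m (pt z).2 = z%:M.
  by rewrite mulmxDr -scalemxAr l2w1 l2w2 add0r scale_scalar_mx mulr1.
have scalar1_inj (a b : k) : (a%:M : 'M_1) = b%:M -> a = b.
  by move/matrixP/(_ 0 0); rewrite !mxE.
apply: (@pow_fibers_not_cover _ _
  (fun y z => exists g v, g \in unitmx /\ pt z = Ad_semi P N g v y) d s d_gt0).
  move=> y z z' [g [v [gu yz]]] [g' [v' [g'u yz']]].
  have [c [cu cJ] lE] :=
    same_orbit_nilJ gu g'u (congr1 fst (esym yz)) (congr1 fst (esym yz')).
  have := lE _ l1D; have := lE _ l2D; rewrite -yz -yz' chi1E // chi2E // -!scalemxAl.
  rewrite !l1pt !l2pt !scale_scalar_mx mulr1 => /scalar1_inj -> /scalar1_inj/esym.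
  by move/(chi12 c cu cJ) => chi2d; rewrite exprMn chi2d mul1r.
move=> z; have [y ys [g [v [gu E]]]] := cover (pt z) (ex_intro _ n (nilJ_nilpotent _ _)).
by exists y => //; exists g, v.
Qed.

Section Components.
Variables (r : nat) (U : 'I_r -> 'M[k]_m).
Hypotheses (U_irr : forall i, irr_sub P N (U i)) (U_direct : mxdirect (\sum_(i < r) U i))
  (U_full : (\sum_(i < r) U i == 1%:M)%MS).

Definition others j := (\sum_(i < r | i != j) U i)%MS.

Lemma stable_others j : stable_sub P N (others j).
Proof.
move=> g gu; rewrite /others sumsmxMr; apply: sumsmxS => i _.
by case: (U_irr i) => + _ _; apply.
Qed.

Lemma sub_others j j' : j' != j -> (U j' <= others j)%MS.
Proof. by move=> j'j; apply: (sumsmx_sup j'). Qed.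

Lemma others_full j : (1%:M <= U j + others j)%MS.
Proof.
have -> : (U j + others j)%MS = (\sum_(i < r) U i)%MS by rewrite [RHS](bigD1 j).
by move/eqmxP: U_full => ->.
Qed.

Lemma rank_others j : (\rank (U j) + \rank (others j) <= m)%N.
Proof.
have rank_sum : (\sum_(i < r) \rank (U i))%N = m.
  by move/mxdirectP: U_direct => /= <-; move/eqmxP: U_full => ->; rewrite mxrank1.
rewrite -[X in (_ <= X)%N]rank_sum (bigD1 j) //= leq_add2l /others.
elim/big_rec2: _ => [|i x y _ IH]; first by rewrite mxrank0.
by apply: leq_trans (mxrank_adds_leqif _ _).1 _; rewrite leq_add2l.
Qed.

(* The centraliser of [J] is commutative, so its image under [rho] has a common
   eigenvector in the nonzero stable space [annihJ (others j)]. *)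
Lemma component_functional j : exists l : 'rV[k]_m,
  [/\ l != 0, l *m dJ = 0, l *m (others j)^T = 0, cent_eigenvector l & U j *m l^T != 0].
Proof.
pose L := annihJ P N (others j).
have U_gt0 : (0 < \rank (U j))%N by case: (U_irr j).
have U_stab : stable_sub P N (U j) by case: (U_irr j).
have L_gt0 := annihJ_rank_gt0 rho_rep U_stab (stable_others j) (others_full j)
  (rank_others j) U_gt0.
have L_stab c : c \in unitmx -> centJ c -> stablemx L (rho c).
  by move=> cu cJ; apply: annihJ_stable => //; apply: stable_others.
pose S B := exists2 c, c \in unitmx /\ centJ c & B = restrictmx L (rho c).
have S_comm B B' : S B -> S B' -> B *m B' = B' *m B.
  move=> [c [cu cJ] ->] [c' [c'u c'J] ->].
  rewrite -!conjmxM ?inE ?stablemx_row_base ?L_stab //.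
  by rewrite -!(ratrepM rho_rep) // centJ_comm.
have [v v_neq0 v_eig] := comm_mx_family_eigenvector L_gt0 S_comm.
pose l := v *m row_base L.
have lL : (l <= L)%MS by rewrite (submx_trans (submxMl _ _)) // eq_row_base.
have l_neq0 : l != 0 by rewrite mulmx_free_eq0 ?row_base_free.
have [lD lo] := sub_annihJ lL.
exists l; split => //; last exact: annihJ_mul_neq0 (others_full j) lL l_neq0.
move=> c cu cJ; apply/sub_rVP; rewrite /l -stablemx_restrict ?L_stab //.
by apply: v_eig; exists c.
Qed.

Lemma two_components_infinite_orbits : (1 < r)%N -> ~ finitely_many_orbits P N.
Proof.
move=> r_gt1; pose j1 : 'I_r := Ordinal (ltnW r_gt1); pose j2 : 'I_r := Ordinal r_gt1.
have [l1 [l1_neq0 l1D l1o l1eig Ul1]] := component_functional j1.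
have [l2 [l2_neq0 l2D l2o l2eig Ul2]] := component_functional j2.
have [w1 w1U l1w1] := sub_dual_vector Ul1.
have [w2 w2U l2w2] := sub_dual_vector Ul2.
have l1w2 : l1 *m w2 = 0 by apply: mul_annih_sub l1o (submx_trans w2U (sub_others _)).
have l2w1 : l2 *m w1 = 0 by apply: mul_annih_sub l2o (submx_trans w1U (sub_others _)).
have [chi1 [chi2 [d [d_gt0 chi1E chi2E [chi12 | chi21]]]]] :=
  cent_eigenvector_character_pair l1_neq0 l2_neq0 l1eig l2eig.
  exact: dependent_characters_infinite_orbits
    d_gt0 l1D l2D chi1E chi2E l1w1 l1w2 l2w1 l2w2 chi12.
exact: dependent_characters_infinite_orbits
  d_gt0 l2D l1D chi2E chi1E l2w2 l2w1 l1w2 l1w1 chi21.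
Qed.

End Components.
End Characters.

Lemma single_component_irreducible (k : fieldType) n m
    (P : 'I_m -> 'I_m -> {mpoly k[n * n]}) N r (U : 'I_r -> 'M[k]_m) :
  (0 < m)%N -> (forall i, irr_sub P N (U i)) -> (\sum_(i < r) U i == 1%:M)%MS ->
  (r <= 1)%N -> irreducible_mod P N.
Proof.
case: r U => [|[|//]] U m_gt0 U_irr U_full _.
  move: U_full; rewrite big_ord0 => /eqmx_rank; rewrite mxrank0 mxrank1 => m0.
  by rewrite -m0 in m_gt0.
move: U_full; rewrite big_ord1 => /eqmxP U1.
have [_ _ U_min] := U_irr ord0.
split=> [g _ | | V V_stab _]; [exact: submx1 | by rewrite mxrank1 |].
case: (U_min V V_stab) => [|V0 | VU]; [by rewrite U1 submx1 | by left |].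
by right; apply/eqmxP; apply: eqmx_trans U1; apply/eqmxP.
Qed.

Theorem lemma1p3 (k : closedFieldType) (n m : nat)
  (P : 'I_m -> 'I_m -> {mpoly k[n * n]}) (N : nat) :
  (0 < m)%N ->
  is_rep P N ->
  compl_reducible P N ->
  finitely_many_orbits P N ->
  irreducible_mod P N.
Proof.
move=> m_gt0 rho_rep [r [U [U_irr U_direct U_full]]] finite_orbits.
have [r_gt1 | r_le1] := ltnP 1 r.
  by case: (two_components_infinite_orbits rho_rep U_irr U_direct U_full r_gt1).
exact: single_component_irreducible m_gt0 U_irr U_full r_le1.
Qed.
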